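(* Let $L$ be a locale. Then $T:\mathbf{Fuzz}(L)\to\mathbf{Mon}(L_{+})$ is a well-defined functor, $F\mapsto \psi_F$ (with a sheaf morphism $g:F\to G$ sent to $(g_i, \text{the relation }\psi_F\le \psi_G\circ g_i)$) is a well-defined functor $\psi:\mathbf{Mon}(L_{+})\to\mathbf{Fuzz}(L)$, and these functors form an equivalence of categories: there is a natural isomorphism $F\cong T(\psi_F)$ for every $F\in\mathbf{Mon}(L_{+})$, and $\psi_{T(\phi)}=\phi$ for every fuzzy set $\phi:X\to L$ (where $T(\phi)(i)=X$).
   Context: A locale (frame) $L$ is a complete lattice in which finite meets distribute over arbitrary joins. It carries a Grothendieck topology in which a family $\{b_j \le a\}$ covers $a$ iff $\bigvee_j b_j = a$; a sieve on $a$ is covering iff its join is $a$. A presheaf on $L$ is a functor $L^{op}\to\mathbf{Set}$; it is a sheaf if $F(a)\to\varprojlim_{b\in R}F(b)$ is a bijection for every covering sieve $R$ of every $a$. Write $i$ for the bottom element of $L$ and $L_{+}=L\sqcup\{0\}$ for the locale obtained by adjoining a new bottom element $0<i$. A sheaf of monomorphisms on $L_{+}$ is a sheaf $F$ on $L_{+}$ such that for every $a\le b$ in $L$ the restriction $F(b)\to F(a)$ is injective; $\mathbf{Mon}(L_{+})$ is the full subcategory of sheaves on $L_{+}$ on these objects. For $c\in L$ we regard $F(c)$ as a subset of the generic fibre $F(i)$. $\mathbf{Fuzz}(L)$: objects are functions $\psi:X\to L$ ($X$ a set); a morphism $(X,\psi)\to(Y,\phi)$ is a function $f:X\to Y$ such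 that $\psi(x)\le\phi(f(x))$ for all $x\in X$. For $\psi:X\to L$, $T(\psi)$ is the presheaf on $L_{+}$ with $T(\psi)(a)=\psi^{-1}(\{y\in L: y\ge a\})$ for $a\in L$, $T(\psi)(0)=\ast$, restriction maps the inclusions; a morphism $f$ induces $T(\psi)\to T(\phi)$ by restricting $f$. For $F\in\mathbf{Mon}(L_{+})$, $\psi_F:F(i)\to L$ is $\psi_F(x)=\sup\{b\in L: x\in F(b)\}$ (this supremum is attained). *)

Record Frame := {
  car :> Type;
  le : car -> car -> Prop;
  sup : (car -> Prop) -> car;
  meet : car -> car -> car;
  le_refl : forall a, le a a;
  le_trans : forall a b c, le a b -> le b c -> le a c;
  le_antisym : forall a b, le a b -> le b a -> a = b;
  sup_ub : forall (S : car -> Prop) a, S a -> le a (sup S);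
  sup_least : forall (S : car -> Prop) b, (forall a, S a -> le a b) -> le (sup S) b;
  meet_lb1 : forall a b, le (meet a b) a;
  meet_lb2 : forall a b, le (meet a b) b;
  meet_glb : forall a b c, le c a -> le c b -> le c (meet a b);
  meet_sup_distr : forall a (S : car -> Prop),
      meet a (sup S) = sup (fun c => exists s, S s /\ c = meet a s)
}.

Arguments le {f} _ _.
Arguments sup {f} _.
Arguments meet {f} _ _.
Arguments le_trans {f} {a b c} _ _.
Arguments sup_least {f} S b _.

Section Defs.
Variable L : Frame.

Definition bot : L := sup (fun _ => False).

Lemma bot_le : forall b : L, le bot b.
Proof. intro b. apply sup_least. intros a []. Qed.

(* L_+ = L ⊔ {0}: [None] is the new bottom 0, [Some a] is a ∈ L. *)
Definition lep (a b : option L) : Prop :=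
  match a, b with
  | None, _ => True
  | Some _, None => False
  | Some a, Some b => le a b
  end.

Record PreData := {
  sec :> option L -> Type;
  res : forall a b, lep a b -> sec b -> sec a
}.

Definition is_presheaf (F : PreData) : Prop :=
  (forall a (h : lep a a) x, res F a a h x = x) /\
  (forall a b c (hab : lep a b) (hbc : lep b c) (hac : lep a c) x,
      res F a b hab (res F b c hbc x) = res F a c hac x).

Definition sieve (R : option L -> Prop) (a : option L) : Prop :=
  (forall b, R b -> lep b a) /\ (forall b c, R b -> lep c b -> R c).

Definition covers (R : option L -> Prop) (a : option L) : Prop :=
  (forall b, R b -> lep b a) /\
  (forall c, (forall b, R b -> lep b c) -> lep a c).

Definition matching (F : PreData) (R : option L -> Prop)
  (s : forall b, R b -> F b) : Prop :=
  forall b c (hb : R b) (hc : R c) (h : lep c b), res F c b h (s b hb) = s c hc.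

Definition is_sheaf (F : PreData) : Prop :=
  forall a R, sieve R a -> covers R a ->
    (forall x y : F a,
        (forall b (hb : R b) (h : lep b a), res F b a h x = res F b a h y) -> x = y) /\
    (forall s : forall b, R b -> F b, matching F R s ->
        exists x : F a, forall b (hb : R b) (h : lep b a), res F b a h x = s b hb).

Definition is_mono (F : PreData) : Prop :=
  forall (a b : L) (h : le a b) (x y : F (Some b)),
    res F (Some a) (Some b) h x = res F (Some a) (Some b) h y -> x = y.

Definition is_Mon (F : PreData) : Prop :=
  is_presheaf F /\ is_sheaf F /\ is_mono F.

Definition natural (F G : PreData) (g : forall a, F a -> G a) : Prop :=
  forall a b (h : lep a b) (x : F b), g a (res F a b h x) = res G a b h (g b x).

Definition bijective {A B : Type} (f : A -> B) : Prop :=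
  (forall x y, f x = f y -> x = y) /\ (forall y, exists x, f x = y).

Record Fuzzy := { fset : Type; fval : fset -> L }.
Arguments fval : clear implicits.

Definition fuzzy_hom (X Y : Fuzzy) (f : fset X -> fset Y) : Prop :=
  forall x, le (fval X x) (fval Y (f x)).

Definition Tsec (X : Fuzzy) (a : option L) : Type :=
  match a with
  | None => unit
  | Some a => {x : fset X | le a (fval X x)}
  end.

Definition Tres (X : Fuzzy) (a b : option L) : lep a b -> Tsec X b -> Tsec X a :=
  match a as a', b as b' return lep a' b' -> Tsec X b' -> Tsec X a' with
  | None, _ => fun _ _ => tt
  | Some a, None => fun h _ => False_rect _ h
  | Some a, Some b => fun h s =>
      exist _ (proj1_sig s) (le_trans h (proj2_sig s))
  end.



Definition T (X : Fuzzy) : PreData := {| sec := Tsec X; res := Tres X |}.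

Definition Tmap (X Y : Fuzzy) (f : fset X -> fset Y) (hf : fuzzy_hom X Y f)
  : forall a, T X a -> T Y a :=
  fun a => match a as a' return Tsec X a' -> Tsec Y a' with
  | None => fun _ => tt
  | Some a => fun s => exist _ (f (proj1_sig s)) (le_trans (proj2_sig s) (hf _))
  end.

(* psi_F(x) = sup { b | x ∈ F(b) }, F(b) seen inside F(i) via restriction *)
Definition psiF (F : PreData) (x : F (Some bot)) : L :=
  sup (fun b => exists y : F (Some b), res F (Some bot) (Some b) (bot_le b) y = x).

Definition psiOb (F : PreData) : Fuzzy := {| fset := F (Some bot); fval := psiF F |}.

End Defs.

Arguments bot {L}.
Arguments lep {L} a b.
Arguments sec {L} _ _.
Arguments res {L} _ a b _ _.
Arguments is_Mon {L} F.
Arguments natural {L} F G g.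
Arguments fset {L} _.
Arguments fval {L} _ _.
Arguments fuzzy_hom {L} X Y f.
Arguments T {L} X.
Arguments Tmap {L} X Y f hf a _.
Arguments psiF {L} F x.
Arguments psiOb {L} F.

(* T(psi_F) and F agree because, in a sheaf of monomorphisms, an element y of
   the generic fibre F(i) lies in F(b) exactly for b <= psi_F(y): the elements of
   F(b) restricting to y form a matching family on the sieve of all such b, and
   by injectivity of the restrictions they glue to an element of F(psi_F(y)).
   Conversely, T(phi) is a sheaf because a matching family on a covering sieve
   of a is a single x with b <= phi(x) for every b in the sieve, hence with
   a <= phi(x). *)

From Stdlib Require Import Classical ClassicalEpsilon ProofIrrelevance.

Lemma proj1_sig_inj {A : Type} {P : A -> Prop} (x y : {a : A | P a}) :
  proj1_sig x = proj1_sig y -> x = y.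
Proof.
  destruct x as [x hx], y as [y hy]; simpl; intros ->.
  f_equal; apply proof_irrelevance.
Qed.

Section Sheaves.
Variable L : Frame.

Lemma covers_Some_inhabited (R : option L -> Prop) (a : L) :
  covers L R (Some a) -> exists b, R (Some b).
Proof.
  intros [_ Hleast]. apply NNPP; intros Hno.
  apply (Hleast None). intros [b|] hb; simpl; [apply Hno; eauto | exact I].
Qed.

(* The empty sieve covers the new bottom 0. *)
Lemma sheaf_None_singleton (F : PreData L) :
  is_sheaf L F -> exists x0 : F None, forall x, x = x0.
Proof.
  intros HS.
  destruct (HS None (fun _ => False)) as [Hsep Hglue].
  - split; [intros b [] | intros b c []].
  - split; [intros b [] | intros c _; exact I].
  - destruct (Hglue (fun b hb => False_rect _ hb)) as [x0 _]; [intros b c [] |].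
    exists x0. intros x. apply Hsep. intros b [].
Qed.

End Sheaves.

Section FuzzySheaf.
Variable L : Frame.
Variable X : Fuzzy L.

Lemma T_presheaf : is_presheaf L (T X).
Proof.
  split.
  - intros [a|] h x; simpl; [apply proj1_sig_inj; reflexivity | now destruct x].
  - intros [a|] [b|] [c|] hab hbc hac x; simpl in *; try contradiction;
      try reflexivity.
    apply proj1_sig_inj; reflexivity.
Qed.

Lemma T_mono : is_mono L (T X).
Proof.
  intros a b h x y E. apply (f_equal (@proj1_sig _ _)) in E.
  now apply proj1_sig_inj.
Qed.

(* Two members of a sieve are compared through their meet, which is in the sieve. *)
Lemma T_matching_constant (R : option L -> Prop) (a : option L)
  (s : forall b, R b -> T X b) (b0 : L) (hb0 : R (Some b0)) :
  sieve L R a -> matching L (T X) R s ->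
  forall b (hb : R (Some b)),
    proj1_sig (s (Some b) hb : Tsec L X (Some b))
    = proj1_sig (s (Some b0) hb0 : Tsec L X (Some b0)).
Proof.
  intros [_ Hdown] Hmatch b hb.
  assert (hm : R (Some (meet b b0))) by (apply (Hdown (Some b)); [exact hb | apply meet_lb1]).
  pose proof (Hmatch _ _ hb hm (meet_lb1 L b b0)) as E1.
  pose proof (Hmatch _ _ hb0 hm (meet_lb2 L b b0)) as E2.
  apply (f_equal (@proj1_sig _ _)) in E1, E2; simpl in E1, E2.
  now rewrite E1, E2.
Qed.

Lemma T_sheaf : is_sheaf L (T X).
Proof.
  intros [a|] R Hsieve Hcov.
  - destruct (covers_Some_inhabited L R a Hcov) as [b0 hb0]. split.
    + intros x y Hxy.
      specialize (Hxy (Some b0) hb0 (proj1 Hsieve _ hb0)).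
      apply (f_equal (@proj1_sig _ _)) in Hxy.
      now apply proj1_sig_inj.
    + intros s Hmatch.
      set (x0 := proj1_sig (s (Some b0) hb0 : Tsec L X (Some b0))).
      pose proof (T_matching_constant R (Some a) s b0 hb0 Hsieve Hmatch) as Hconst.
      assert (ha : le a (fval X x0)).
      { apply (proj2 Hcov (Some (fval X x0))). intros [b|] hb; simpl; [|exact I].
        unfold x0; rewrite <- (Hconst b hb). exact (proj2_sig (s (Some b) hb : Tsec L X (Some b))). }
      exists (exist _ x0 ha : Tsec L X (Some a)).
      intros [b|] hb h; simpl.
      * apply proj1_sig_inj; simpl. symmetry. apply Hconst.
      * now destruct (s None hb).
  - split.
    + intros [] [] _. reflexivity.
    + intros s _. exists tt. intros [b|] hb h; simpl in *; [contradiction|].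
      now destruct (s None hb).
Qed.

Lemma T_Mon : is_Mon (T X).
Proof. exact (conj T_presheaf (conj T_sheaf T_mono)). Qed.

Lemma psiF_T (x : fset X) (h : le bot (fval X x)) :
  psiF (T X) (exist _ x h) = fval X x.
Proof.
  apply le_antisym.
  - apply sup_least. intros b [[x' hb] E]. simpl in E.
    apply (f_equal (@proj1_sig _ _)) in E. simpl in E. now subst x'.
  - apply sup_ub. exists (exist _ x (le_refl L _) : Tsec L X (Some (fval X x))).
    now apply proj1_sig_inj.
Qed.

End FuzzySheaf.

Section TFunctor.
Variable L : Frame.

Lemma Tmap_natural (X Y : Fuzzy L) (f : fset X -> fset Y) (hf : fuzzy_hom X Y f) :
  natural (T X) (T Y) (Tmap X Y f hf).
Proof.
  intros [a|] [b|] h x; simpl in *; try contradiction; try reflexivity.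
  now apply proj1_sig_inj.
Qed.

Lemma Tmap_id (X : Fuzzy L) (hid : fuzzy_hom X X (fun x => x)) a (s : T X a) :
  Tmap X X (fun x => x) hid a s = s.
Proof.
  destruct a as [a|]; simpl; [now apply proj1_sig_inj | now destruct s].
Qed.

Lemma Tmap_comp (X Y Z : Fuzzy L) (f : fset X -> fset Y) (g : fset Y -> fset Z)
  (hf : fuzzy_hom X Y f) (hg : fuzzy_hom Y Z g)
  (hgf : fuzzy_hom X Z (fun x => g (f x))) a (s : T X a) :
  Tmap X Z (fun x => g (f x)) hgf a s = Tmap Y Z g hg a (Tmap X Y f hf a s).
Proof.
  destruct a as [a|]; simpl; [now apply proj1_sig_inj | reflexivity].
Qed.

End TFunctor.

Section Psi.
Variable L : Frame.

Definition carries (F : PreData L) (y : F (Some bot)) (b : L) : Prop :=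
  exists z : F (Some b), res F (Some bot) (Some b) (bot_le L b) z = y.

Lemma psiF_hom (F G : PreData L) (g : forall a, F a -> G a) :
  natural F G g -> fuzzy_hom (psiOb F) (psiOb G) (g (Some bot)).
Proof.
  intros Hg y. apply sup_least. intros b [z Hz]. apply sup_ub.
  exists (g (Some b) z). now rewrite <- Hg, Hz.
Qed.

Lemma carries_down_closed (F : PreData L) (y : F (Some bot)) (b c : L) :
  is_presheaf L F -> le c b -> carries F y b -> carries F y c.
Proof.
  intros [_ Hcomp] hcb [z Hz].
  exists (res F (Some c) (Some b) hcb z).
  now rewrite (Hcomp (Some bot) (Some c) (Some b) _ _ (bot_le L b)).
Qed.

(* The join of the sieve generated by [carries F y] is psi_F(y); gluing the
   (unique, by monicity) witnesses puts y in F(psi_F(y)). *)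
Lemma psiF_attained (F : PreData L) (y : F (Some bot)) :
  is_Mon F -> carries F y (psiF F y).
Proof.
  intros HM; pose proof HM as [[Hid Hcomp] [Hsheaf Hmono]].
  set (R := fun c : option L => match c with None => True | Some b => carries F y b end).
  assert (Hbot : carries F y bot) by (exists y; apply Hid).
  assert (Hbound : forall b, R b -> lep b (Some (psiF F y))).
  { intros [b|] hb; simpl; [now apply sup_ub | exact I]. }
  assert (Hsieve : sieve L R (Some (psiF F y))).
  { split; [exact Hbound|].
    intros [b|] [c|] hb hcb; simpl in *; try contradiction; try exact I.
    exact (carries_down_closed F y b c (proj1 HM) hcb hb). }
  assert (Hcov : covers L R (Some (psiF F y))).
  { split; [exact Hbound|]. intros [c|] Hc.
    - apply sup_least. intros b hb. exact (Hc (Some b) hb).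
    - exact (Hc (Some bot) Hbot). }
  destruct (sheaf_None_singleton L F Hsheaf) as [n0 Hn0].
  set (P := fun c => match c return F c -> Prop with
                     | None => fun _ => True
                     | Some b => fun z => res F (Some bot) (Some b) (bot_le L b) z = y end).
  assert (Hwit : forall c, R c -> exists z, P c z).
  { intros [b|] hb; [exact hb | now exists n0]. }
  set (s := fun c hc => proj1_sig (constructive_indefinite_description _ (Hwit c hc))).
  assert (HsP : forall c hc, P c (s c hc)).
  { intros c hc. exact (proj2_sig (constructive_indefinite_description _ (Hwit c hc))). }
  destruct (proj2 (Hsheaf _ R Hsieve Hcov) s) as [x Hx].
  - intros b [c|] hb hc h.
    + destruct b as [b|]; [|contradiction].
      apply (Hmono bot c (bot_le L c)).
      rewrite (Hcomp (Some bot) (Some c) (Some b) _ _ (bot_le L b)).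
      pose proof (HsP _ hb) as E1; pose proof (HsP _ hc) as E2; simpl in E1, E2.
      now rewrite E1, E2.
    + now rewrite (Hn0 (res _ _ _ _ _)), (Hn0 (s None hc)).
  - exists x. rewrite (Hx (Some bot) Hbot (bot_le L _)).
    pose proof (HsP (Some bot) Hbot) as E; simpl in E. now rewrite Hid in E.
Qed.

Definition eta (F : PreData L) (a : option L) : F a -> T (psiOb F) a :=
  match a return F a -> Tsec L (psiOb F) a with
  | None => fun _ => tt
  | Some a => fun x =>
      exist _ (res F (Some bot) (Some a) (bot_le L a) x)
        (sup_ub L _ a (ex_intro _ x eq_refl))
  end.

Lemma eta_natural (F : PreData L) :
  is_presheaf L F -> natural F (T (psiOb F)) (eta F).
Proof.
  intros [_ Hcomp] [a|] [b|] h x; simpl in *; try contradiction; try reflexivity.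
  apply proj1_sig_inj; simpl. apply (Hcomp (Some bot) (Some a) (Some b)).
Qed.

Lemma eta_bijective (F : PreData L) a : is_Mon F -> bijective (eta F a).
Proof.
  intros HM; pose proof HM as [[_ Hcomp] [Hsheaf Hmono]].
  destruct (sheaf_None_singleton L F Hsheaf) as [n0 Hn0].
  destruct a as [a|]; split.
  - intros x1 x2 E. apply (f_equal (@proj1_sig _ _)) in E.
    exact (Hmono bot a (bot_le L a) x1 x2 E).
  - intros [y hy]. destruct (psiF_attained F y HM) as [x Hx].
    exists (res F (Some a) (Some (psiF F y)) hy x).
    apply proj1_sig_inj; simpl.
    now rewrite (Hcomp (Some bot) (Some a) (Some (psiF F y)) _ _ (bot_le L _)).
  - intros x1 x2 _. now rewrite (Hn0 x1), (Hn0 x2).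
  - intros []. now exists n0.
Qed.

Lemma eta_natural_in_F (F G : PreData L) (g : forall a, F a -> G a)
  (hg : fuzzy_hom (psiOb F) (psiOb G) (g (Some bot))) a (x : F a) :
  natural F G g ->
  eta G a (g a x) = Tmap (psiOb F) (psiOb G) (g (Some bot)) hg a (eta F a x).
Proof.
  intros Hg. destruct a as [a|]; simpl; [|reflexivity].
  apply proj1_sig_inj; simpl. symmetry. apply Hg.
Qed.

End Psi.

Theorem theorem12 (L : Frame) :
  (* T : Fuzz(L) -> Mon(L_+) is a well-defined functor *)
  (forall X : Fuzzy L, is_Mon (T X)) /\
  (forall (X Y : Fuzzy L) (f : fset X -> fset Y) (hf : fuzzy_hom X Y f),
      natural (T X) (T Y) (Tmap X Y f hf)) /\
  (forall (X : Fuzzy L) (hid : fuzzy_hom X X (fun x => x)) a (s : T X a),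
      Tmap X X (fun x => x) hid a s = s) /\
  (forall (X Y Z : Fuzzy L) (f : fset X -> fset Y) (g : fset Y -> fset Z)
     (hf : fuzzy_hom X Y f) (hg : fuzzy_hom Y Z g)
     (hgf : fuzzy_hom X Z (fun x => g (f x))) a (s : T X a),
      Tmap X Z (fun x => g (f x)) hgf a s = Tmap Y Z g hg a (Tmap X Y f hf a s)) /\
  (* psi : Mon(L_+) -> Fuzz(L) is well defined on morphisms *)
  (forall (F G : PreData L) (g : forall a, F a -> G a),
      is_Mon F -> is_Mon G -> natural F G g ->
      fuzzy_hom (psiOb F) (psiOb G) (g (Some bot))) /\
  (* natural isomorphism F ≅ T(psi_F) *)
  (exists eta : forall (F : PreData L) a, F a -> T (psiOb F) a,
      (forall F : PreData L, is_Mon F ->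
          natural F (T (psiOb F)) (eta F) /\ forall a, bijective (eta F a)) /\
      (forall (F G : PreData L) (g : forall a, F a -> G a),
          is_Mon F -> is_Mon G -> natural F G g ->
          forall (hg : fuzzy_hom (psiOb F) (psiOb G) (g (Some bot))) a (x : F a),
            eta G a (g a x) = Tmap (psiOb F) (psiOb G) (g (Some bot)) hg a (eta F a x))) /\
  (* psi_{T(phi)} = phi *)
  (forall (X : Fuzzy L) (x : fset X) (h : le bot (fval X x)),
      psiF (T X) (exist _ x h) = fval X x).
Proof.
  split; [exact (T_Mon L)|].
  split; [exact (Tmap_natural L)|].
  split; [exact (Tmap_id L)|].
  split; [exact (Tmap_comp L)|].
  split; [intros F G g _ _; exact (psiF_hom L F G g)|].
  split; [|exact (psiF_T L)].
  exists (eta L). split.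
  - intros F HM. split; [exact (eta_natural L F (proj1 HM)) | intros a; exact (eta_bijective L F a HM)].
  - intros F G g _ _ Hg hg a x. exact (eta_natural_in_F L F G g hg a x Hg).
Qed.
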